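(* Let $n\ge 3$ and $a\in\mathbb{C}^\times$ with $a\neq\pm1$. Let $\{e_{\alpha_i},f_{\alpha_i}\mid 1\leq i\leq 2n-1\}$ be Chevalley generators of the simple Lie algebra $\mathfrak{g}$ of type $A_{2n-1}$, with simple roots $\alpha_1,\dots,\alpha_{2n-1}$ labeled along the Dynkin chain $1-2-\cdots-(2n-1)$. Put $$e_{\alpha_{2n}}=a[f_{\alpha_{2n-1}},[\cdots,[f_{\alpha_2},f_{\alpha_1}]\cdots]],\qquad f_{\alpha_{2n}}=a^{-1}[[\cdots[e_{\alpha_1},e_{\alpha_2}],\cdots],e_{\alpha_{2n-1}}].$$ Then there is a Lie algebra homomorphism $\mathrm{gim}(M_n)\to\mathfrak{g}$ with $e_i\mapsto e_{\alpha_i}-f_{\alpha_{n+i}}$ and $f_i\mapsto f_{\alpha_i}-e_{\alpha_{n+i}}$ for $1\le i\le n$.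
   Context: For $n\geq 3$, $M_n=(m_{i,j})$ is the $n\times n$ integer matrix with $m_{i,i}=2$, $m_{i,i+1}=m_{i+1,i}=-1$ ($1\le i\le n-1$), $m_{1,n}=m_{n,1}=1$, all other entries $0$. $\mathrm{gim}(M_n)$ is the complex Lie algebra generated by $e_i,f_i,h_i$ ($1\le i\le n$) with relations: (R1) $[h_i,e_j]=m_{i,j}e_j$, $[h_i,f_j]=-m_{i,j}f_j$, $[e_i,f_i]=h_i$ for all $i,j$; (R2) for $i\ne j$ with $m_{i,j}\le0$: $[e_i,f_j]=0=[f_i,e_j]$, $(\mathrm{ad}\,e_i)^{1-m_{i,j}}e_j=0=(\mathrm{ad}\,f_i)^{1-m_{i,j}}f_j$; (R3) for $i\ne j$ with $m_{i,j}>0$: $[e_i,e_j]=0=[f_i,f_j]$, $(\mathrm{ad}\,e_i)^{m_{i,j}+1}f_j=0=(\mathrm{ad}\,f_i)^{m_{i,j}+1}e_j$. Chevalley generators $e_{\alpha_i},f_{\alpha_i}$ satisfy the standard Serre presentation with $h_{\alpha_i}=[e_{\alpha_i},f_{\alpha_i}]$. *)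

From mathcomp Require Import all_boot all_algebra.
From mathcomp Require Export reals complex.
Set Implicit Arguments. Unset Strict Implicit. Unset Printing Implicit Defensive.
Import GRing.Theory Num.Theory.
Local Open Scope ring_scope.

Definition is_lie_bracket (K : fieldType) (L : lmodType K)
    (br : L -> L -> L) : Prop :=
  [/\ (forall (c : K) (x y z : L), br (c *: x + y) z = c *: br x z + br y z),
      (forall (c : K) (x y z : L), br z (c *: x + y) = c *: br z x + br z y),
      (forall x : L, br x x = 0) &
      (forall x y z : L, br x (br y z) + br y (br z x) + br z (br x y) = 0)].

Definition lie_subalgebra (K : fieldType) (L : lmodType K)
    (br : L -> L -> L) (S : L -> Prop) : Prop :=
  [/\ S 0,
      (forall x y, S x -> S y -> S (x + y)),
      (forall (c : K) x, S x -> S (c *: x)) &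
      (forall x y, S x -> S y -> S (br x y))].

Definition ad_pow (K : fieldType) (L : lmodType K) (br : L -> L -> L)
    (k : nat) (x y : L) : L := iter k (br x) y.

Definition cartanA (i j : nat) : int :=
  if i == j then (2 : int)
  else if (i == j.+1) || (j == i.+1) then (-1 : int) else (0 : int).

(* The elements e_{alpha_i}, f_{alpha_i} (1 <= i <= m) are Chevalley
   generators of the Lie algebra (L, br): they satisfy the Chevalley-Serre
   relations of type A_m (with h_i := [e_i, f_i]), generate L, and L <> 0.
   By Serre's theorem this says exactly that L is the simple Lie algebra of
   type A_m and (E, F) is a system of Chevalley generators of it. *)
Definition chevalley_generators_A (K : fieldType) (L : lmodType K)
    (br : L -> L -> L) (m : nat) (E F : nat -> L) : Prop :=
  let H i := br (E i) (F i) in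
  [/\ (forall i j, (1 <= i <= m)%N -> (1 <= j <= m)%N -> br (H i) (H j) = 0),
      (forall i j, (1 <= i <= m)%N -> (1 <= j <= m)%N ->
          br (H i) (E j) = (cartanA i j)%:~R *: E j /\
          br (H i) (F j) = - ((cartanA i j)%:~R *: F j)),
      (forall i j, (1 <= i <= m)%N -> (1 <= j <= m)%N -> i != j ->
          br (E i) (F j) = 0),
      (forall i j, (1 <= i <= m)%N -> (1 <= j <= m)%N -> i != j ->
          ad_pow br (absz (1 - cartanA i j)) (E i) (E j) = 0 /\
          ad_pow br (absz (1 - cartanA i j)) (F i) (F j) = 0) &
      (forall S : L -> Prop, lie_subalgebra br S ->
          (forall i, (1 <= i <= m)%N -> S (E i) /\ S (F i)) -> forall x, S x) /\
      (exists x : L, x != 0)].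

Fixpoint nested_left (K : fieldType) (L : lmodType K) (br : L -> L -> L)
    (F : nat -> L) (k : nat) : L :=
  match k with
  | 0 => 0
  | 1 => F 1%N
  | k'.+1 => br (F k) (nested_left br F k')
  end.

Fixpoint nested_right (K : fieldType) (L : lmodType K) (br : L -> L -> L)
    (E : nat -> L) (k : nat) : L :=
  match k with
  | 0 => 0
  | 1 => E 1%N
  | k'.+1 => br (nested_right br E k') (E k)
  end.

Definition gimM (n i j : nat) : int :=
  if i == j then (2 : int)
  else if (i == j.+1) || (j == i.+1) then (-1 : int)
  else if ((i == 1%N) && (j == n)) || ((i == n) && (j == 1%N)) then (1 : int)
  else (0 : int).

(* The Lie algebra gim(M_n) is presented by generators e_i, f_i, h_i
   (1 <= i <= n) and relations (R1)-(R3).  By the universal property of a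
   presented Lie algebra, a Lie algebra homomorphism gim(M_n) -> (L, br)
   with e_i |-> X i, f_i |-> Y i exists iff the relations (R1)-(R3) hold in L
   for X, Y and h_i |-> H i; since [e_i, f_i] = h_i is a relation, necessarily
   H i = [X i, Y i].  [gim_hom_exists] is this unfolded universal property. *)
Definition gim_relations (K : fieldType) (L : lmodType K) (br : L -> L -> L)
    (n : nat) (X Y H : nat -> L) : Prop :=
  [/\
      (forall i j, (1 <= i <= n)%N -> (1 <= j <= n)%N ->
         [/\ br (H i) (X j) = (gimM n i j)%:~R *: X j,
             br (H i) (Y j) = - ((gimM n i j)%:~R *: Y j) &
             br (X i) (Y i) = H i]),
      (forall i j, (1 <= i <= n)%N -> (1 <= j <= n)%N -> i != j ->
         (gimM n i j <= 0)%R ->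
         [/\ br (X i) (Y j) = 0, br (Y i) (X j) = 0,
             ad_pow br (absz (1 - gimM n i j)) (X i) (X j) = 0 &
             ad_pow br (absz (1 - gimM n i j)) (Y i) (Y j) = 0]) &
      (forall i j, (1 <= i <= n)%N -> (1 <= j <= n)%N -> i != j ->
         (0 < gimM n i j)%R ->
         [/\ br (X i) (X j) = 0, br (Y i) (Y j) = 0,
             ad_pow br (absz (gimM n i j + 1)) (X i) (Y j) = 0 &
             ad_pow br (absz (gimM n i j + 1)) (Y i) (X j) = 0])].

Definition gim_hom_exists (K : fieldType) (L : lmodType K) (br : L -> L -> L)
    (n : nat) (X Y : nat -> L) : Prop :=
  exists H : nat -> L, gim_relations br n X Y H.

From mathcomp Require Import all_boot all_algebra.
From mathcomp Require Import reals complex.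
From mathcomp Require Import zify.
Import GRing.Theory Num.Theory.
Local Open Scope ring_scope.
Set Implicit Arguments. Unset Strict Implicit.

(* Put m = 2n - 1, and let T = [[e_1, e_2], ..., e_m] and
   S = [f_m, [..., [f_2, f_1]]] be root vectors for the highest root
   theta = alpha_1 + ... + alpha_m and for -theta.  Since theta(h_k) is 1 for
   k = 1, m and 0 otherwise, [e_k, T] = 0, [T, S] = h_1 + ... + h_m and
   [f_k, T] = 0 for 1 < k < m, the elements e_1, ..., e_m, a S and
   f_1, ..., f_m, a^-1 T satisfy the Serre relations of the affine Cartan
   matrix of type A_(2n-1)^(1), whose Dynkin diagram is a 2n-cycle.  The
   matrix M_n is the folding of that cycle by the rotation i |-> n + i: with
   X_i = E_i - F_(n+i) and Y_i = F_i - E_(n+i) the cross brackets between the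
   nodes i and n + i vanish, m_ij = c_ij - c_(n+i)j, and the relations of
   gim(M_n) follow term by term from the cyclic Serre relations. *)

Section LieBracket.

Variables (K : fieldType) (L : lmodType K) (br : L -> L -> L).
Hypothesis lie : is_lie_bracket br.

Lemma brZDl c x y z : br (c *: x + y) z = c *: br x z + br y z.
Proof. by case: lie. Qed.

Lemma brZDr c x y z : br z (c *: x + y) = c *: br z x + br z y.
Proof. by case: lie. Qed.

Lemma brxx x : br x x = 0.
Proof. by case: lie. Qed.

Lemma br_jacobi x y z : br x (br y z) + br y (br z x) + br z (br x y) = 0.
Proof. by case: lie. Qed.

Lemma br0l z : br 0 z = 0.
Proof.
by have := brZDl 1 0 0 z; rewrite !scale1r addr0 -{1}[br 0 z]addr0 => /addrI.
Qed.

Lemma br0r z : br z 0 = 0.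
Proof.
by have := brZDr 1 0 0 z; rewrite !scale1r addr0 -{1}[br z 0]addr0 => /addrI.
Qed.

Lemma brDl x y z : br (x + y) z = br x z + br y z.
Proof. by have := brZDl 1 x y z; rewrite !scale1r. Qed.

Lemma brDr x y z : br z (x + y) = br z x + br z y.
Proof. by have := brZDr 1 x y z; rewrite !scale1r. Qed.

Lemma brZl c x z : br (c *: x) z = c *: br x z.
Proof. by rewrite -[c *: x]addr0 brZDl br0l addr0. Qed.

Lemma brZr c x z : br z (c *: x) = c *: br z x.
Proof. by rewrite -[c *: x]addr0 brZDr br0r addr0. Qed.

Lemma brNl x z : br (- x) z = - br x z.
Proof. by rewrite -scaleN1r brZl scaleN1r. Qed.

Lemma brNr x z : br z (- x) = - br z x.
Proof. by rewrite -scaleN1r brZr scaleN1r. Qed.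

Lemma brBl x y z : br (x - y) z = br x z - br y z.
Proof. by rewrite brDl brNl. Qed.

Lemma brBr x y z : br z (x - y) = br z x - br z y.
Proof. by rewrite brDr brNr. Qed.

Lemma brC x y : br x y = - br y x.
Proof.
apply/eqP; rewrite -addr_eq0; have := brxx (x + y).
by rewrite brDl !brDr !brxx add0r addr0 => ->.
Qed.

Lemma br_suml (I : Type) (r : seq I) (P : pred I) (g : I -> L) z :
  br (\sum_(i <- r | P i) g i) z = \sum_(i <- r | P i) br (g i) z.
Proof. exact: (big_morph (br^~ z) (fun x y => brDl x y z) (br0l z)). Qed.

Lemma ad_leibniz x y z : br x (br y z) = br (br x y) z + br y (br x z).
Proof.
apply/eqP; rewrite -subr_eq0 opprD addrA; have := br_jacobi x y z.
by rewrite (brC z x) (brC z (br x y)) brNr => <-; rewrite addrAC.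
Qed.

Lemma br_brl x y z : br (br x y) z = br x (br y z) - br y (br x z).
Proof. by rewrite ad_leibniz addrK. Qed.

Lemma ad_leibniz0 x y z : br x y = 0 -> br x z = 0 -> br x (br y z) = 0.
Proof. by move=> xy xz; rewrite ad_leibniz xy xz br0l br0r addr0. Qed.

Lemma brBl_eq0 x y z : br x z = 0 -> br y z = 0 -> br (x - y) z = 0.
Proof. by move=> xz yz; rewrite brBl xz yz subr0. Qed.

Lemma brBr_eq0 x y z : br z x = 0 -> br z y = 0 -> br z (x - y) = 0.
Proof. by move=> zx zy; rewrite brBr zx zy subr0. Qed.

Lemma ad2_subl A B u : br A B = 0 -> br B u = 0 -> br A (br A u) = 0 ->
  br (A - B) (br (A - B) u) = 0.
Proof.
move=> AB Bu AAu; rewrite [br (A - B) u]brBl Bu subr0 brBl AAu ad_leibniz Bu.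
by rewrite br0r addr0 [br B A]brC AB oppr0 br0l subrr.
Qed.

Lemma ad2_subr A B u : br A B = 0 -> br A u = 0 -> br B (br B u) = 0 ->
  br (A - B) (br (A - B) u) = 0.
Proof.
move=> AB Au BBu; rewrite [br (A - B) u]brBl Au sub0r brNr brBl BBu subr0.
by rewrite ad_leibniz AB Au br0l br0r addr0 oppr0.
Qed.

End LieBracket.

Lemma lie_bracket_opp (K : fieldType) (L : lmodType K) (br : L -> L -> L) :
  is_lie_bracket br -> is_lie_bracket (fun x y => br y x).
Proof.
move=> lie; split=> [c x y z|c x y z|x|x y z] /=.
- exact: brZDr.
- exact: brZDl.
- exact: brxx.
- rewrite [br (br z y) x](brC lie) [br (br x z) y](brC lie) [br (br y x) z](brC lie).
  rewrite [br z y](brC lie) [br x z](brC lie) [br y x](brC lie) !(brNr lie) !opprK.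
  exact: br_jacobi.
Qed.

Lemma self_opp_eq0 (K : numFieldType) (L : lmodType K) (v : L) : v = - v -> v = 0.
Proof.
move=> vN; have: 2%:R *: v = 0 :> L by rewrite scaler_nat mulr2n {1}vN addNr.
by move/eqP; rewrite scaler_eq0 pnatr_eq0 => /eqP.
Qed.

Lemma nested_rightS (K : fieldType) (L : lmodType K) (br : L -> L -> L) E p :
  (0 < p)%N -> nested_right br E p.+1 = br (nested_right br E p) (E p.+1).
Proof. by case: p. Qed.

Lemma nested_leftS (K : fieldType) (L : lmodType K) (br : L -> L -> L) F p :
  (0 < p)%N -> nested_left br F p.+1 = br (F p.+1) (nested_left br F p).
Proof. by case: p. Qed.

Lemma nested_right_opp (K : fieldType) (L : lmodType K) (br : L -> L -> L) F p :
  nested_right (fun x y => br y x) F p = nested_left br F p.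
Proof. by elim: p => [|[|p] IH] //; congr (br _ _); exact: IH. Qed.

Definition cartan_cycle (N i j : nat) : int :=
  if ((i == 1) && (j == N)) || ((i == N) && (j == 1)) then -1 else cartanA i j.

(* wtA p k = (alpha_1 + ... + alpha_p)(h_k) in type A. *)
Definition wtA (p k : nat) : int :=
  (((k == 1) : nat) + ((k == p) : nat))%:Z - ((k == p.+1) : nat)%:Z.

Ltac cartan_split := first [ lia | case: eqP => ? /=; cartan_split ].

Ltac cartan_lia :=
  repeat match goal with
  | H : cartanA _ _ = _ |- _ => move: H
  | H : cartan_cycle _ _ _ = _ |- _ => move: H
  end;
  rewrite ?/gimM ?/cartan_cycle ?/cartanA ?/wtA; cartan_split.

Lemma cartanA_sym i j : cartanA i j = cartanA j i.
Proof. cartan_lia. Qed.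

(* Serre relations for a Cartan matrix C with off-diagonal entries 0 or -1. *)
Definition serre_relations (K : fieldType) (L : lmodType K) (br : L -> L -> L)
    (C : nat -> nat -> int) (m : nat) (E F : nat -> L) : Prop :=
  [/\ forall i j, (1 <= i <= m)%N -> (1 <= j <= m)%N ->
        br (br (E i) (F i)) (E j) = (C i j)%:~R *: E j /\
        br (br (E i) (F i)) (F j) = - ((C i j)%:~R *: F j),
      forall i j, (1 <= i <= m)%N -> (1 <= j <= m)%N -> i != j ->
        br (E i) (F j) = 0,
      forall i j, (1 <= i <= m)%N -> (1 <= j <= m)%N -> i != j -> C i j = 0 ->
        br (E i) (E j) = 0 /\ br (F i) (F j) = 0 &
      forall i j, (1 <= i <= m)%N -> (1 <= j <= m)%N -> C i j = -1 ->
        br (E i) (br (E i) (E j)) = 0 /\ br (F i) (br (F i) (F j)) = 0].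

Section SerreRelations.

Variables (K : fieldType) (L : lmodType K) (br : L -> L -> L).
Hypothesis lie : is_lie_bracket br.
Variables (C : nat -> nat -> int) (m : nat) (E F : nat -> L).
Hypothesis serre : serre_relations br C m E F.

Lemma serre_hE i j : (1 <= i <= m)%N -> (1 <= j <= m)%N ->
  br (br (E i) (F i)) (E j) = (C i j)%:~R *: E j.
Proof. by case: serre => hEF _ _ _ hi hj; case: (hEF i j hi hj). Qed.

Lemma serre_hF i j : (1 <= i <= m)%N -> (1 <= j <= m)%N ->
  br (br (E i) (F i)) (F j) = - ((C i j)%:~R *: F j).
Proof. by case: serre => hEF _ _ _ hi hj; case: (hEF i j hi hj). Qed.

Lemma serre_EF i j : (1 <= i <= m)%N -> (1 <= j <= m)%N -> i != j ->
  br (E i) (F j) = 0.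
Proof. by case: serre => _ EF _ _; apply: EF. Qed.

Lemma serre_FE i j : (1 <= i <= m)%N -> (1 <= j <= m)%N -> i != j ->
  br (F i) (E j) = 0.
Proof. by move=> hi hj ij; rewrite (brC lie) serre_EF 1?eq_sym ?oppr0. Qed.

Lemma serre_EE i j : (1 <= i <= m)%N -> (1 <= j <= m)%N -> i != j -> C i j = 0 ->
  br (E i) (E j) = 0.
Proof. by case: serre => _ _ EE _ hi hj ij Cij; case: (EE i j hi hj ij Cij). Qed.

Lemma serre_FF i j : (1 <= i <= m)%N -> (1 <= j <= m)%N -> i != j -> C i j = 0 ->
  br (F i) (F j) = 0.
Proof. by case: serre => _ _ FF _ hi hj ij Cij; case: (FF i j hi hj ij Cij). Qed.

Lemma serre_EEE i j : (1 <= i <= m)%N -> (1 <= j <= m)%N -> C i j = -1 ->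
  br (E i) (br (E i) (E j)) = 0.
Proof. by case: serre => _ _ _ EEE hi hj Cij; case: (EEE i j hi hj Cij). Qed.

Lemma serre_FFF i j : (1 <= i <= m)%N -> (1 <= j <= m)%N -> C i j = -1 ->
  br (F i) (br (F i) (F j)) = 0.
Proof. by case: serre => _ _ _ FFF hi hj Cij; case: (FFF i j hi hj Cij). Qed.

End SerreRelations.

Lemma serre_relations_opp (K : fieldType) (L : lmodType K) (br : L -> L -> L) C m E F :
  is_lie_bracket br -> serre_relations br C m E F ->
  serre_relations (fun x y => br y x) C m F E.
Proof.
move=> lie serre; split=> i j hi hj /=.
- rewrite [br (F j) _](brC lie) [br (E j) _](brC lie).
  by rewrite (serre_hF serre) // (serre_hE serre) // opprK.
- by move=> ij; rewrite (serre_EF serre) // eq_sym.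
- move=> ij Cij; rewrite (brC lie) (serre_FF serre) // (brC lie) (serre_EE serre) //.
  by rewrite oppr0.
- move=> Cij; rewrite (brC lie) [br (F j) _](brC lie) (brNr lie) (serre_FFF serre) //.
  by rewrite (brC lie) [br (E j) _](brC lie) (brNr lie) (serre_EEE serre) // !oppr0.
Qed.

Lemma serre_relations_chain (K : fieldType) (L : lmodType K) (br : L -> L -> L) m E F :
  chevalley_generators_A br m E F -> serre_relations br cartanA m E F.
Proof.
rewrite /chevalley_generators_A /= => -[_ hEF EF serre _]; split=> // i j hi hj.
- by move=> ij Cij; have := serre i j hi hj ij; rewrite Cij.
- move=> Cij; have ij : i != j by apply: contra_eqN Cij => /eqP ->; rewrite /cartanA eqxx.
  by have := serre i j hi hj ij; rewrite Cij.
Qed.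

Lemma wtA1 k : (1 <= k)%N -> wtA 1 k = cartanA k 1.
Proof. cartan_lia. Qed.

Lemma wtAS p k : (1 <= p)%N -> (1 <= k)%N -> wtA p.+1 k = wtA p k + cartanA k p.+1.
Proof. cartan_lia. Qed.

Lemma wtA_sum q k : (1 <= q)%N -> (1 <= k)%N ->
  \sum_(1 <= j < q.+1) cartanA k j = wtA q k.
Proof.
move=> + k1; elim: q => [//|q IH] _.
case: (posnP q) => [->|q0]; first by rewrite big_nat1 wtA1.
by rewrite big_nat_recr //= IH // wtAS.
Qed.

Lemma wtA_total m : (2 <= m)%N -> \sum_(1 <= i < m.+1) wtA m i = 2.
Proof.
move=> m2; rewrite big_ltn ?big_nat_recr /=; try lia.
rewrite big1_seq ?add0r => [|i /andP[_]]; rewrite ?mem_index_iota; cartan_lia.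
Qed.

Lemma br_nested_right_eq0 (K : fieldType) (L : lmodType K) (br : L -> L -> L) E z p :
  is_lie_bracket br -> (forall k, (1 <= k <= p)%N -> br z (E k) = 0) ->
  br z (nested_right br E p) = 0.
Proof.
move=> lie; elim: p => [|p IH] zE; first exact: br0r.
case: (posnP p) => p0; first by rewrite p0; apply: zE; lia.
rewrite nested_rightS //; apply: ad_leibniz0 => //; last by apply: zE; lia.
by apply: IH => k hk; apply: zE; lia.
Qed.

Ltac serre_vanish serre lie :=
  lazymatch type of serre with serre_relations ?br _ _ ?E ?F =>
  lazymatch goal with
  | |- br (E _) (F _) = 0 => apply: (serre_EF serre)
  | |- br (F _) (E _) = 0 => apply: (serre_FE lie serre)
  | |- br (E ?i) (br (E ?i) (E _)) = 0 => apply: (serre_EEE serre)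
  | |- br (F ?i) (br (F ?i) (F _)) = 0 => apply: (serre_FFF serre)
  | |- br (E _) (E _) = 0 => apply: (serre_EE serre)
  | |- br (F _) (F _) = 0 => apply: (serre_FF serre)
  end end; cartan_lia.

Section ChainNestedBrackets.

Variables (K : numFieldType) (L : lmodType K) (br : L -> L -> L).
Hypothesis lie : is_lie_bracket br.
Variables (m : nat) (E F : nat -> L).
Hypothesis serre : serre_relations br cartanA m E F.

Local Notation T p := (nested_right br E p).

Lemma br_h_nested_right p k : (1 <= p <= m)%N -> (1 <= k <= m)%N ->
  br (br (E k) (F k)) (T p) = (wtA p k)%:~R *: T p.
Proof.
elim: p => [//|p IH] /andP[_ pm] hk.
case: (posnP p) => [->|p0]; first by rewrite wtA1 ?(serre_hE serre) //; lia.
rewrite nested_rightS // (ad_leibniz lie) IH ?(serre_hE serre); try lia.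
by rewrite (brZl lie) (brZr lie) -scalerDl -intrD wtAS //; lia.
Qed.

Lemma br_nested_right_E_far p k : (p.+2 <= k <= m)%N -> br (T p) (E k) = 0.
Proof.
elim: p k => [|p IH] k hk; first exact: br0l.
case: (posnP p) => [->|p0]; first by rewrite /=; serre_vanish serre lie.
rewrite nested_rightS // (br_brl lie) IH; last by lia.
rewrite (br0r lie) subr0 (_ : br (E p.+1) (E k) = 0) ?(br0r lie) //.
by serre_vanish serre lie.
Qed.

Lemma br_E_E_nested_right p : (1 <= p)%N -> (p < m)%N ->
  br (E p.+1) (br (E p.+1) (T p)) = 0.
Proof.
case: p => [//|q] _ qm; case: (posnP q) => [->|q0]; first by rewrite /=; serre_vanish serre lie.
have ET : br (E q.+2) (T q) = 0.
  by rewrite (brC lie) br_nested_right_E_far ?oppr0 //; lia.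
rewrite nested_rightS // (ad_leibniz lie (E q.+2) (T q)) ET (br0l lie) add0r.
rewrite (ad_leibniz lie) ET (br0l lie) add0r.
by rewrite (_ : br (E q.+2) (br (E q.+2) (E q.+1)) = 0) ?(br0r lie) //; serre_vanish serre lie.
Qed.

Lemma br_E_nested_right p k : (1 <= k <= p)%N -> (p <= m)%N -> br (E k) (T p) = 0.
Proof.
elim: p k => [|p IH] k hk pm; first by lia.
case: (posnP p) => [p0|p0].
  by rewrite p0 (_ : k = 1%N) ?(brxx lie) //; lia.
case: (eqVneq k p.+1) => [->|kp].
  by rewrite nested_rightS // [br (T p) _](brC lie) (brNr lie) br_E_E_nested_right ?oppr0 //; lia.
rewrite nested_rightS // (ad_leibniz lie) IH ?(br0l lie) ?add0r; try lia.
case: (ltnP k p) => kp'.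
  by rewrite (_ : br (E k) (E p.+1) = 0) ?(br0r lie) //; serre_vanish serre lie.
have {kp kp' hk} -> : k = p by lia.
case: p p0 IH pm => [//|q] _ IH pm.
case: (posnP q) => [->|q0]; first by rewrite /=; serre_vanish serre lie.
(* Jacobi only shows that [T q.+1, [E q.+1, E q.+2]] is its own opposite. *)
apply: self_opp_eq0.
rewrite {1}nested_rightS // (br_brl lie) (_ : br (E q.+1) (br (E q.+1) (E q.+2)) = 0); last first.
  by serre_vanish serre lie.
rewrite (br0r lie) sub0r (ad_leibniz lie (T q)) (@br_nested_right_E_far q q.+2); last by lia.
rewrite (br0r lie) addr0 -nested_rightS // (ad_leibniz lie (E q.+1)) IH; try lia.
by rewrite (br0l lie) add0r.
Qed.

Lemma br_F_nested_right_gt p k : (p < k <= m)%N -> br (F k) (T p) = 0.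
Proof.
by move=> hk; apply: br_nested_right_eq0 => // j hj; serre_vanish serre lie.
Qed.

Lemma br_F_nested_right_last p : (2 <= p <= m)%N -> br (F p) (T p) = - T p.-1.
Proof.
case: p => [//|p] hp; rewrite nested_rightS; last by lia.
rewrite (ad_leibniz lie) br_F_nested_right_gt ?(br0l lie) ?add0r; last by lia.
rewrite [br (F _) _](brC lie) (brNr lie) -(brC lie) br_h_nested_right; try lia.
by rewrite (_ : wtA p p.+1 = -1) ?scaleN1r //; cartan_lia.
Qed.

Lemma br_F_nested_right_mid p k : (1 < k < p)%N -> (p <= m)%N -> br (F k) (T p) = 0.
Proof.
elim: p k => [|p IH] k hk pm; first by lia.
rewrite nested_rightS; last by lia.
rewrite (ad_leibniz lie) (_ : br (F k) (E p.+1) = 0) ?(br0r lie) ?addr0; last first.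
  by serre_vanish serre lie.
case: (ltnP k p) => kp; first by rewrite IH ?(br0l lie) //; lia.
have -> : k = p by lia.
rewrite br_F_nested_right_last; last by lia.
by rewrite (brNl lie) br_nested_right_E_far ?oppr0 //; lia.
Qed.

Lemma br_F1_nested_right p : (2 <= p <= m)%N ->
  br (F 1) (T p) = nested_right br (fun i => E i.+1) p.-1.
Proof.
elim: p => [//|p IH] hp; rewrite nested_rightS; last by lia.
rewrite (ad_leibniz lie) [br (F 1) (E _)](_ : _ = 0) ?(br0r lie) ?addr0; last first.
  by serre_vanish serre lie.
case: (eqVneq p 1%N) => [->|p1].
  rewrite /= [br (F 1) _](brC lie) (brNl lie) (serre_hE serre); try lia.
  by rewrite scaler_int mulrN1z opprK.
by rewrite IH; last lia; case: p {IH} hp p1 => [|[|p]].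
Qed.

Lemma nested_right_highest : (2 <= m)%N ->
  [/\ forall k, (1 <= k <= m)%N -> br (br (E k) (F k)) (T m) = (wtA m k)%:~R *: T m,
      forall k, (1 <= k <= m)%N -> br (E k) (T m) = 0,
      forall k, (1 < k < m)%N -> br (F k) (T m) = 0,
      forall k, (k == 1) || (k == m) -> br (F k) (br (F k) (T m)) = 0 &
      forall k, (k == 1) || (k == m) -> br (T m) (br (T m) (F k)) = 0].
Proof.
move=> m2; have ET k : (1 <= k <= m)%N -> br (E k) (T m) = 0.
  by move=> hk; apply: br_E_nested_right; lia.
have TE k : (1 <= k <= m)%N -> br (T m) (E k) = 0.
  by move=> hk; rewrite (brC lie) ET ?oppr0.
split=> // [k hk|k hk|k /orP[]/eqP->|k /orP[]/eqP->].
- by apply: br_h_nested_right; lia.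
- by apply: br_F_nested_right_mid; lia.
- rewrite br_F1_nested_right; last by lia.
  by apply: br_nested_right_eq0 => // j hj; serre_vanish serre lie.
- by rewrite br_F_nested_right_last ?(brNr lie) ?br_F_nested_right_gt ?oppr0 //; lia.
- rewrite (brC lie (T m) (F 1)) (brNr lie) br_F1_nested_right; last by lia.
  by rewrite br_nested_right_eq0 ?oppr0 // => j hj; apply: TE; lia.
- rewrite (brC lie (T m) (F m)) br_F_nested_right_last ?opprK; last by lia.
  by apply: br_nested_right_eq0 => // j hj; apply: TE; lia.
Qed.

End ChainNestedBrackets.

Section CycleExtension.

Variables (K : numFieldType) (L : lmodType K) (br : L -> L -> L).
Hypothesis lie : is_lie_bracket br.
Variables (m : nat) (E F : nat -> L).
Hypothesis serre : serre_relations br cartanA m E F.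

Local Notation h i := (br (E i) (F i)).
Local Notation T p := (nested_right br E p).
Local Notation S p := (nested_left br F p).

Let lie' := lie_bracket_opp lie.
Let serre' := serre_relations_opp lie serre.

Lemma nested_left_lowest : (2 <= m)%N ->
  [/\ forall k, (1 <= k <= m)%N -> br (h k) (S m) = - ((wtA m k)%:~R *: S m),
      forall k, (1 <= k <= m)%N -> br (F k) (S m) = 0,
      forall k, (1 < k < m)%N -> br (E k) (S m) = 0,
      forall k, (k == 1) || (k == m) -> br (E k) (br (E k) (S m)) = 0 &
      forall k, (k == 1) || (k == m) -> br (S m) (br (S m) (E k)) = 0].
Proof.
move=> m2; have [hS FS ES EES SSE] := nested_right_highest lie' serre' m2.
rewrite nested_right_opp /= in hS FS ES EES SSE.
split=> k hk.
- by rewrite (brC lie) hS.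
- by rewrite (brC lie) FS ?oppr0.
- by rewrite (brC lie) ES ?oppr0.
- by rewrite (brC lie) (brC lie (E k)) (brNl lie) opprK EES ?oppr0.
- by rewrite (brC lie (S m)) (brC lie (S m) (E k)) (brNl lie) opprK SSE ?oppr0.
Qed.

Lemma br_sum_h q l : (1 <= q <= m)%N -> (1 <= l <= m)%N ->
  br (\sum_(1 <= i < q.+1) h i) (E l) = (wtA q l)%:~R *: E l /\
  br (\sum_(1 <= i < q.+1) h i) (F l) = - ((wtA q l)%:~R *: F l).
Proof.
move=> hq hl; rewrite !(br_suml lie) -wtA_sum; try lia.
rewrite (big_morph _ (@intrD K) (mulr0z 1)) !scaler_suml -sumrN.
by split; apply: eq_big_nat => i hi; rewrite cartanA_sym;
  [apply: (serre_hE serre) | apply: (serre_hF serre)]; lia.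
Qed.

Lemma br_nested_right_left p : (1 <= p <= m)%N ->
  br (T p) (S p) = \sum_(1 <= i < p.+1) h i.
Proof.
elim: p => [//|p IH] /andP[_ pm]; case: (posnP p) => [->|p0]; first by rewrite big_nat1.
have [hE _] := br_sum_h (q := p) (l := p.+1) ltac:(lia) ltac:(lia).
have wtA_next : wtA p p.+1 = -1 by cartan_lia.
have TF : br (T p) (F p.+1) = 0.
  by rewrite (brC lie) (br_F_nested_right_gt lie serre) ?oppr0 //; lia.
have SE : br (S p) (E p.+1) = 0.
  by rewrite -nested_right_opp (br_F_nested_right_gt lie' serre') //; lia.
have TEF : br (br (T p) (E p.+1)) (F p.+1) = T p.
  rewrite (br_brl lie) TF (br0r lie) subr0 (brC lie).
  rewrite (br_h_nested_right lie serre) ?wtA_next; try lia.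
  by rewrite scaleN1r opprK.
have TES : br (br (T p) (E p.+1)) (S p) = - E p.+1.
  rewrite (br_brl lie) (brC lie (E p.+1) (S p)) SE oppr0 (br0r lie) sub0r IH; last by lia.
  by rewrite (brC lie (E p.+1)) opprK hE wtA_next scaleN1r.
rewrite nested_rightS // nested_leftS // (ad_leibniz lie) TEF TES IH; last by lia.
by rewrite (brNr lie) -(brC lie) [in RHS]big_nat_recr.
Qed.

Lemma br_sum_h_extremal : (2 <= m)%N ->
  br (\sum_(1 <= i < m.+1) h i) (S m) = - ((2 : int)%:~R *: S m) /\
  br (\sum_(1 <= i < m.+1) h i) (T m) = (2 : int)%:~R *: T m.
Proof.
move=> m2; have [hT _ _ _ _] := nested_right_highest lie serre m2.
have [hS _ _ _ _] := nested_left_lowest m2.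
rewrite !(br_suml lie) -(wtA_total m2) (big_morph _ (@intrD K) (mulr0z 1)).
rewrite !scaler_suml -sumrN; split; apply: eq_big_nat => i hi; [exact: hS | exact: hT].
Qed.

Variables (a : K) (N : nat).
Hypotheses (a_neq0 : a != 0) (m2 : (2 <= m)%N) (Nm : N = m.+1).

Let E' k := if k == N then a *: S m else E k.
Let F' k := if k == N then a^-1 *: T m else F k.

Let E'N : E' N = a *: S m. Proof. by rewrite /E' eqxx. Qed.
Let F'N : F' N = a^-1 *: T m. Proof. by rewrite /F' eqxx. Qed.
Let E'E k : k != N -> E' k = E k. Proof. by rewrite /E' => /negbTE ->. Qed.
Let F'F k : k != N -> F' k = F k. Proof. by rewrite /F' => /negbTE ->. Qed.

Lemma br_hN : br (E' N) (F' N) = - \sum_(1 <= i < m.+1) h i.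
Proof.
rewrite E'N F'N (brZl lie) (brZr lie) scalerA mulfV // scale1r (brC lie).
by rewrite br_nested_right_left //; lia.
Qed.

Lemma cycle_extension_h k l : (1 <= k <= N)%N -> (1 <= l <= N)%N ->
  br (br (E' k) (F' k)) (E' l) = (cartan_cycle N k l)%:~R *: E' l /\
  br (br (E' k) (F' k)) (F' l) = - ((cartan_cycle N k l)%:~R *: F' l).
Proof.
have [hT _ _ _ _] := nested_right_highest lie serre m2.
have [hS _ _ _ _] := nested_left_lowest m2.
have [sumS sumT] := br_sum_h_extremal m2.
move=> hk hl; case: (eqVneq k N) => [->|kN]; case: (eqVneq l N) => [->|lN].
- rewrite br_hN !(brNl lie) E'N F'N (brZr lie) (brZr lie) sumS sumT.
  rewrite (_ : cartan_cycle N N N = 2); last by cartan_lia.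
  by rewrite scalerN opprK !scalerA (mulrC a) (mulrC a^-1).
- have [hE hF] := br_sum_h (q := m) (l := l) ltac:(lia) ltac:(lia).
  rewrite br_hN !(brNl lie) E'E // F'F // hE hF.
  by rewrite (_ : cartan_cycle N N l = - wtA m l) ?intrN ?scaleNr ?opprK //; cartan_lia.
- rewrite E'E // F'F // E'N F'N (brZr lie) (brZr lie) hS ?hT; try lia.
  rewrite (_ : cartan_cycle N k N = - wtA m k) ?intrN ?scaleNr; last by cartan_lia.
  by rewrite scalerN opprK !scalerA (mulrC a) (mulrC a^-1).
- rewrite !E'E // !F'F // (serre_hE serre) ?(serre_hF serre); try lia.
  by rewrite (_ : cartan_cycle N k l = cartanA k l) //; cartan_lia.
Qed.

Lemma cycle_extension_EF k l : (1 <= k <= N)%N -> (1 <= l <= N)%N -> k != l ->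
  br (E' k) (F' l) = 0.
Proof.
have [_ ET _ _ _] := nested_right_highest lie serre m2.
have [_ FS _ _ _] := nested_left_lowest m2.
move=> hk hl kl; case: (eqVneq k N) => [kN|kN]; case: (eqVneq l N) => [lN|lN].
- by rewrite kN lN eqxx in kl.
- by rewrite kN E'N F'F // (brZl lie) (brC lie) FS ?oppr0 ?scaler0 //; lia.
- by rewrite lN F'N E'E // (brZr lie) ET ?scaler0 //; lia.
- by rewrite E'E // F'F //; serre_vanish serre lie.
Qed.

Lemma cycle_extension_EE k l : (1 <= k <= N)%N -> (1 <= l <= N)%N -> k != l ->
  cartan_cycle N k l = 0 -> br (E' k) (E' l) = 0 /\ br (F' k) (F' l) = 0.
Proof.
have [_ _ FT _ _] := nested_right_highest lie serre m2.
have [_ _ ES _ _] := nested_left_lowest m2.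
move=> hk hl kl Ckl; case: (eqVneq k N) => [kN|kN]; case: (eqVneq l N) => [lN|lN].
- by rewrite kN lN eqxx in kl.
- have l_mid : (1 < l < m)%N by rewrite kN in Ckl; cartan_lia.
  rewrite kN E'N F'N E'E // F'F // (brZl lie) (brZl lie) (brC lie (S m)) ES //.
  by rewrite (brC lie) FT // !oppr0 !scaler0.
- have k_mid : (1 < k < m)%N by rewrite lN in Ckl; cartan_lia.
  by rewrite lN E'N F'N E'E // F'F // (brZr lie) (brZr lie) ES // FT // !scaler0.
- rewrite !E'E // !F'F //; split; serre_vanish serre lie.
Qed.

Lemma cycle_extension_EEE k l : (1 <= k <= N)%N -> (1 <= l <= N)%N ->
  cartan_cycle N k l = -1 ->
  br (E' k) (br (E' k) (E' l)) = 0 /\ br (F' k) (br (F' k) (F' l)) = 0.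
Proof.
have [_ _ _ FFT TTF] := nested_right_highest lie serre m2.
have [_ _ _ EES SSE] := nested_left_lowest m2.
move=> hk hl Ckl; case: (eqVneq k N) => [kN|kN]; case: (eqVneq l N) => [lN|lN].
- by rewrite kN lN in Ckl; cartan_lia.
- have l_end : (l == 1) || (l == m) by rewrite kN in Ckl; cartan_lia.
  rewrite kN E'N F'N E'E // F'F // !(brZl lie) !(brZr lie) SSE // TTF //.
  by rewrite !scaler0.
- have k_end : (k == 1) || (k == m) by rewrite lN in Ckl; cartan_lia.
  by rewrite lN E'N F'N E'E // F'F // !(brZr lie) EES // FFT // !scaler0.
- rewrite !E'E // !F'F //; split; serre_vanish serre lie.
Qed.

Lemma serre_relations_cycle_extension : serre_relations br (cartan_cycle N) N E' F'.
Proof.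
split=> k l hk hl; [exact: cycle_extension_h | exact: cycle_extension_EF | | ].
- exact: cycle_extension_EE.
- exact: cycle_extension_EEE.
Qed.

End CycleExtension.

Lemma scalerBB (R : pzRingType) (V : lmodType R) (a b c d : R) (u v : V) :
  a *: u + b *: v - (c *: u + d *: v) = (a - c) *: u - (d - b) *: v.
Proof. by rewrite !scalerBl opprD opprB addrACA. Qed.

Ltac lin_vanish serre lie :=
  apply: (brBl_eq0 lie); apply: (brBr_eq0 lie); serre_vanish serre lie.

Ltac ad2_vanish serre lie :=
  rewrite (brBr lie); apply: (brBr_eq0 lie);
  first [ apply: (ad2_subl lie); serre_vanish serre lie
        | apply: (ad2_subr lie); serre_vanish serre lie ].

Section Folding.

Variables (K : fieldType) (L : lmodType K) (br : L -> L -> L).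
Hypothesis lie : is_lie_bracket br.
Variables (n : nat) (E F : nat -> L).
Hypotheses (n3 : (3 <= n)%N) (serre : serre_relations br (cartan_cycle (2 * n)) (2 * n) E F).

Local Notation X i := (E i - F (n + i)%N).
Local Notation Y i := (F i - E (n + i)%N).

Lemma br_fold_X_Y i : (1 <= i <= n)%N ->
  br (X i) (Y i) = br (E i) (F i) - br (E (n + i)%N) (F (n + i)%N).
Proof.
move=> hi; rewrite (brBl lie) !(brBr lie) (brC lie (F (n + i)%N) (E _)).
rewrite (_ : br (E i) (E (n + i)%N) = 0); last by serre_vanish serre lie.
rewrite (_ : br (F (n + i)%N) (F i) = 0); last by serre_vanish serre lie.
by rewrite subr0 sub0r opprK.
Qed.

Lemma gimM_fold i j : (1 <= i <= n)%N -> (1 <= j <= n)%N ->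
  gimM n i j = cartan_cycle (2 * n) i j - cartan_cycle (2 * n) (n + i) j /\
  gimM n i j = cartan_cycle (2 * n) (n + i) (n + j) - cartan_cycle (2 * n) i (n + j).
Proof. by split; cartan_lia. Qed.

Lemma fold_R1 i j : (1 <= i <= n)%N -> (1 <= j <= n)%N ->
  br (br (X i) (Y i)) (X j) = (gimM n i j)%:~R *: X j /\
  br (br (X i) (Y i)) (Y j) = - ((gimM n i j)%:~R *: Y j).
Proof.
move=> hi hj; have [gE gF] := gimM_fold hi hj.
rewrite br_fold_X_Y // !(brBl lie) !(brBr lie) !(serre_hE serre) ?(serre_hF serre); try lia.
split.
- by rewrite !opprK scalerBB -!intrB -gE -gF scalerBr.
- by rewrite -!opprD scalerBB -!intrB -gE -gF scalerBr.
Qed.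

Lemma fold_R2 i j : (1 <= i <= n)%N -> (1 <= j <= n)%N -> i != j ->
  (gimM n i j <= 0)%R ->
  [/\ br (X i) (Y j) = 0, br (Y i) (X j) = 0,
      ad_pow br (absz (1 - gimM n i j)) (X i) (X j) = 0 &
      ad_pow br (absz (1 - gimM n i j)) (Y i) (Y j) = 0].
Proof.
move=> hi hj ij g0.
have not_ends : ~~ ((i == 1) && (j == n)) && ~~ ((i == n) && (j == 1)).
  by move: g0; cartan_lia.
case: (boolP ((i == j.+1) || (j == i.+1))) => adj.
- rewrite (_ : gimM n i j = -1) /ad_pow /=; last by cartan_lia.
  by split; [lin_vanish serre lie | lin_vanish serre lie | ad2_vanish serre lie ..].
- rewrite (_ : gimM n i j = 0) /ad_pow /=; last by cartan_lia.
  by split; lin_vanish serre lie.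
Qed.

Lemma fold_R3 i j : (1 <= i <= n)%N -> (1 <= j <= n)%N -> i != j ->
  (0 < gimM n i j)%R ->
  [/\ br (X i) (X j) = 0, br (Y i) (Y j) = 0,
      ad_pow br (absz (gimM n i j + 1)) (X i) (Y j) = 0 &
      ad_pow br (absz (gimM n i j + 1)) (Y i) (X j) = 0].
Proof.
move=> hi hj ij g0.
have ends : ((i == 1) && (j == n)) || ((i == n) && (j == 1)) by move: g0; cartan_lia.
rewrite (_ : gimM n i j = 1) /ad_pow /=; last by cartan_lia.
by split; [lin_vanish serre lie | lin_vanish serre lie | ad2_vanish serre lie ..].
Qed.

Lemma gim_relations_fold :
  gim_relations br n (fun i => X i) (fun i => Y i) (fun i => br (X i) (Y i)).
Proof.
split=> i j hi hj.
- by have [RX RY] := fold_R1 hi hj.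
- exact: fold_R2.
- exact: fold_R3.
Qed.

End Folding.

Theorem lemma2p2 (R : realType) (n : nat) (a : R[i])
    (L : lmodType R[i]) (br : L -> L -> L) (E F : nat -> L) :
  (3 <= n)%N -> a != 0 -> a != 1 -> a != -1 ->
  is_lie_bracket br ->
  chevalley_generators_A br (2 * n).-1 E F ->
  let E' := fun k => if k == (2 * n)%N
                     then a *: nested_left br F (2 * n).-1 else E k in
  let F' := fun k => if k == (2 * n)%N
                     then a^-1 *: nested_right br E (2 * n).-1 else F k in
  gim_hom_exists br n (fun i => E' i - F' (n + i)%N)
                      (fun i => F' i - E' (n + i)%N).
Proof.
move=> n3 a_neq0 _ _ lie chevalley E' F'.
have serre := serre_relations_chain chevalley.
have serre' : serre_relations br (cartan_cycle (2 * n)) (2 * n) E' F'.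
  by apply: serre_relations_cycle_extension => //; lia.
by eexists; apply: gim_relations_fold.
Qed.
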